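(* Two elements of $SB_n$ are conjugate if and only if their summit sets are identical.
   Context: Fix $n\ge 2$. $SB_n$ is the monoid with generators $\sigma_i,\sigma_i^{-1},x_i$ ($i=1,\dots,n-1$) and relations: $\sigma_i\sigma_j=\sigma_j\sigma_i$ and $x_ix_j=x_jx_i$ if $|i-j|>1$; $x_i\sigma_j=\sigma_jx_i$ if $|i-j|\ne1$; $\sigma_i\sigma_{i+1}\sigma_i=\sigma_{i+1}\sigma_i\sigma_{i+1}$; $\sigma_i\sigma_{i+1}x_i=x_{i+1}\sigma_i\sigma_{i+1}$; $\sigma_{i+1}\sigma_ix_{i+1}=x_i\sigma_{i+1}\sigma_i$; $\sigma_i\sigma_i^{-1}=\sigma_i^{-1}\sigma_i=1$. Two elements $u,v\in SB_n$ are conjugate if $v=g^{-1}ug$ for some invertible $g\in SB_n$ (equivalently $g$ in the image of the braid group, generated by $\sigma_i^{\pm1}$). $SB_n^+$ is the monoid with generators $\sigma_i,x_i$ and all relations except the last; $\doteq$ denotes equality in $SB_n^+$. $\Delta=\sigma_1\cdots\sigma_{n-1}\,\sigma_1\cdots\sigma_{n-2}\cdots\sigma_1\sigma_2\,\sigma_1$. Every element $W$ of $SB_n$ has a unique Garside (left) normal form $W=\Delta^m\overline{A}$, where $m\in\mathbb Z$ (the power of $W$) and $\overline{A}$ is a positive word (in $\sigma_i,x_i$) that is not positively equal to $\Delta Z$ for any positive $Z$ and is the lexicographically smallest positive word positively equal to itself, for the order $\sigma_1<\cdots<\sigma_{n-1}<x_1<\cdots<x_{n-1}$. The summit power of $W$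 is the maximum of the powers of all elements conjugate to $W$ (this maximum exists), and the summit set of $W$ is the set of Garside normal forms $\Delta^m\overline{A}$ of the elements conjugate to $W$ whose power $m$ equals the summit power. *)

From mathcomp Require Import all_boot all_order all_algebra.
Set Implicit Arguments. Unset Strict Implicit. Unset Printing Implicit Defensive.
Import Order.TTheory GRing.Theory Num.Theory.

(* Letters over index type 'I_k, with k = n - 1: the ordinal i stands for the
   generator with (1-based) index i+1. *)
Inductive letter (k : nat) : Type :=
| Sg of 'I_k
| Si of 'I_k    (* sigma_{i+1}^{-1} *)
| Xg of 'I_k.

Definition word (k : nat) := seq (letter k).

Inductive cong (T : Type) (R : seq T -> seq T -> Prop) : seq T -> seq T -> Prop :=
| cong_refl w : cong R w w
| cong_sym w1 w2 : cong R w1 w2 -> cong R w2 w1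
| cong_trans w1 w2 w3 : cong R w1 w2 -> cong R w2 w3 -> cong R w1 w3
| cong_step a b l r : R l r -> cong R (a ++ l ++ b) (a ++ r ++ b).

Definition far (k : nat) (i j : 'I_k) : bool := (i.+1 < j) || (j.+1 < i).
Definition not_adj (k : nat) (i j : 'I_k) : bool := (i.+1 != j) && (j.+1 != i).

(* the defining relations of SB_n^+ (all except sigma sigma^-1 = 1) *)
Inductive pos_rel (k : nat) : word k -> word k -> Prop :=
| r_ss i j : far i j -> pos_rel [:: Sg i; Sg j] [:: Sg j; Sg i]
| r_xx i j : far i j -> pos_rel [:: Xg i; Xg j] [:: Xg j; Xg i]
| r_xs i j : not_adj i j -> pos_rel [:: Xg i; Sg j] [:: Sg j; Xg i]
| r_braid i j : val j = (val i).+1 ->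
    pos_rel [:: Sg i; Sg j; Sg i] [:: Sg j; Sg i; Sg j]
| r_ssx i j : val j = (val i).+1 ->
    pos_rel [:: Sg i; Sg j; Xg i] [:: Xg j; Sg i; Sg j]
| r_ssx' i j : val j = (val i).+1 ->
    pos_rel [:: Sg j; Sg i; Xg j] [:: Xg i; Sg j; Sg i].

Inductive sb_rel (k : nat) : word k -> word k -> Prop :=
| r_pos l r : pos_rel l r -> sb_rel l r
| r_inv1 i : sb_rel [:: Sg i; Si i] [::]
| r_inv2 i : sb_rel [:: Si i; Sg i] [::].

Definition sbeq (k : nat) : word k -> word k -> Prop := cong (@sb_rel k).
Definition peq (k : nat) : word k -> word k -> Prop := cong (@pos_rel k).

Definition is_pos_letter (k : nat) (a : letter k) : bool :=
  if a is Si _ then false else true.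
Definition positive (k : nat) (w : word k) : bool := all (@is_pos_letter k) w.

Definition rank (k : nat) (a : letter k) : nat :=
  match a with Sg i => val i | Xg i => k + val i | Si i => 2 * k + val i end.

Fixpoint lexlt (k : nat) (s t : word k) : bool :=
  match s, t with
  | [::], [::] => false
  | [::], _ :: _ => true
  | _ :: _, [::] => false
  | a :: s', b :: t' =>
      (rank a < rank b) || ((rank a == rank b) && lexlt s' t')
  end.

(* Delta = sigma_1..sigma_{n-1} sigma_1..sigma_{n-2} ... sigma_1 sigma_2 sigma_1 *)
Definition delta (k : nat) : word k :=
  flatten [seq [seq Sg j | j <- enum 'I_k & val j < t] | t <- rev (iota 1 k)].

Definition inv_letter (k : nat) (a : letter k) : letter k :=
  match a with Sg i => Si i | Si i => Sg i | Xg i => Xg i end.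
Definition inv_word (k : nat) (w : word k) : word k := rev (map (@inv_letter k) w).

Definition delta_pow (k : nat) (m : int) : word k :=
  match m with
  | Posz p => flatten (nseq p (delta k))
  | Negz p => flatten (nseq p.+1 (inv_word (delta k)))
  end.

Definition garside_nf (k : nat) (W : word k) (m : int) (A : word k) : Prop :=
  [/\ positive A,
      sbeq W (delta_pow k m ++ A),
      ~ (exists Z : word k, positive Z /\ peq A (delta k ++ Z)) &
      forall B : word k, positive B -> peq B A -> ~~ lexlt B A].

(* invertible elements of SB_n and conjugacy: v = g^-1 u g *)
Definition conjugate (k : nat) (u v : word k) : Prop :=
  exists g h : word k,
    [/\ sbeq (g ++ h) [::], sbeq (h ++ g) [::] & sbeq v (h ++ u ++ g)].

Definition summit_set (k : nat) (u : word k) (m : int) (A : word k) : Prop :=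
  exists W : word k,
    [/\ conjugate u W, garside_nf W m A &
        forall (W' : word k) (m' : int) (A' : word k),
          conjugate u W' -> garside_nf W' m' A' -> (m' <= m)%R].

From mathcomp Require Import all_boot all_order all_algebra.
From mathcomp Require Import zify.
From Stdlib Require Import Setoid Morphisms Classical Wf_nat.
Set Implicit Arguments. Unset Strict Implicit. Unset Printing Implicit Defensive.
Import GRing.Theory.

(* Conjugation preserves summit sets by definition; conversely, if the summit
   sets agree and contain some (m, A), then u and v are both conjugate to
   Delta^m A.  So the content is that summit sets are nonempty.
   Using the positive relation Delta w = tau(w) Delta, where tau is the flip
   sigma_i |-> sigma_(n-i), x_i |-> x_(n-i), and sigma_i^-1 = Q_i Delta^-1 with
   Q_i positive, every word equals Delta^-p A with A positive.  The exponent
   sum (sigma |-> 1, sigma^-1 |-> -1, x |-> 0) is invariant under equality and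
   conjugation, and bounds m whenever W = Delta^m A with A positive, so maximal
   powers exist, both for a word and over its conjugacy class.  Finally, the
   positive words positively equal to A all have the length of A, so a
   lexicographically least one exists. *)

Section Congruence.
Variables (T : Type) (R : seq T -> seq T -> Prop).

Lemma cong_ctx x y a b : cong R a b -> cong R (x ++ a ++ y) (x ++ b ++ y).
Proof.
elim=> [w|w1 w2 _ IH|w1 w2 w3 _ IH1 _ IH2|a' b' l r H].
- exact: cong_refl.
- exact: cong_sym.
- exact: cong_trans IH1 IH2.
- have E z : x ++ (a' ++ z ++ b') ++ y = (x ++ a') ++ z ++ (b' ++ y).
    by rewrite !catA.
  by rewrite !E; apply: cong_step.
Qed.

Global Instance cong_equiv : Equivalence (cong R).
Proof. by split; [exact: cong_refl | exact: cong_sym | move=> ???; exact: cong_trans]. Qed.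

Global Instance cat_cong_proper : Proper (cong R ==> cong R ==> cong R) cat.
Proof.
move=> a b Hab c d Hcd; transitivity (b ++ c).
- by have := cong_ctx [::] c Hab.
- by have := cong_ctx b [::] Hcd; rewrite !cats0.
Qed.

Global Instance cons_cong_proper x : Proper (cong R ==> cong R) (cons x).
Proof. by move=> a b ab; rewrite -(cat1s x a) -(cat1s x b) ab; reflexivity. Qed.

Lemma cong_of_rel l r : R l r -> cong R l r.
Proof. by move=> H; have := cong_step [::] [::] H; rewrite /= !cats0. Qed.

Lemma cong_sub (R' : seq T -> seq T -> Prop) a b :
  (forall l r, R l r -> R' l r) -> cong R a b -> cong R' a b.
Proof.
move=> RR'; elim=> {a b} [w|w1 w2 _ IH|w1 w2 w3 _ IH1 _ IH2|a b l r H].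
- exact: cong_refl.
- exact: cong_sym.
- exact: cong_trans IH1 IH2.
- exact/cong_step/RR'.
Qed.

Lemma cong_morph (X : Type) (f : seq T -> X) (op : X -> X -> X) a b :
  {morph f : s t / s ++ t >-> op s t} ->
  (forall l r, R l r -> f l = f r) -> cong R a b -> f a = f b.
Proof.
move=> f_cat fR; elim=> {a b} [w|w1 w2 _ IH|w1 w2 w3 _ IH1 _ IH2|a b l r H] //.
- by rewrite IH1.
- by rewrite !f_cat (fR _ _ H).
Qed.

End Congruence.

#[export] Instance sbeq_equiv k : Equivalence (@sbeq k) := cong_equiv _.
#[export] Instance cat_sbeq_proper k :
  Proper (@sbeq k ==> @sbeq k ==> @sbeq k) cat := @cat_cong_proper _ _.
#[export] Instance cons_sbeq_proper k x :
  Proper (@sbeq k ==> @sbeq k) (cons x) := @cons_cong_proper _ _ x.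
#[export] Instance peq_equiv k : Equivalence (@peq k) := cong_equiv _.
#[export] Instance cat_peq_proper k :
  Proper (@peq k ==> @peq k ==> @peq k) cat := @cat_cong_proper _ _.

#[export] Hint Extern 0 (sbeq _ _) => reflexivity : core.
#[export] Hint Extern 0 (peq _ _) => reflexivity : core.

Lemma peq_sbeq k (a b : word k) : peq a b -> sbeq a b.
Proof. by apply: cong_sub; exact: r_pos. Qed.

Section Conjugacy.
Variable k : nat.
Implicit Types u v w : word k.

Lemma conjugate_refl u : conjugate u u.
Proof. by exists [::], [::]; rewrite /= cats0. Qed.

Lemma sbeq_conjugate u v : sbeq u v -> conjugate u v.
Proof. by move=> uv; exists [::], [::]; split; rewrite /= ?cats0 ?uv. Qed.

Lemma conjugate_sym u v : conjugate u v -> conjugate v u.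
Proof.
case=> g [h] [gh hg vE]; exists h, g; split => //.
rewrite vE.
have -> : g ++ (h ++ u ++ g) ++ h = (g ++ h) ++ u ++ (g ++ h) by rewrite !catA.
by rewrite gh cats0.
Qed.

Lemma conjugate_trans v u w : conjugate u v -> conjugate v w -> conjugate u w.
Proof.
case=> g [h] [gh hg vE]; case=> g' [h'] [gh' hg' wE].
exists (g ++ g'), (h' ++ h); split.
- by rewrite -catA (catA g') gh' /= gh.
- by rewrite -catA (catA h) hg /= hg'.
- by rewrite wE vE !catA.
Qed.

End Conjugacy.

(* Positive letters indexed by [nat] instead of ['I_k], to keep index
   arithmetic out of ordinals; [to_letter] sends an index [>= k] to a junk
   letter (via [inord]), so the lemmas carry the bounds explicitly. *)
Inductive nletter := NS of nat | NX of nat.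

Definition nidx (a : nletter) : nat := match a with NS i => i | NX i => i end.
Definition reidx (a : nletter) (j : nat) : nletter :=
  match a with NS _ => NS j | NX _ => NX j end.

Lemma nidx_reidx a j : nidx (reidx a j) = j. Proof. by case: a. Qed.
Lemma reidx_reidx a j j' : reidx (reidx a j) j' = reidx a j'. Proof. by case: a. Qed.

Section NatIndexedWords.
Variable K : nat.
Local Notation k := K.+1.

Definition to_letter (a : nletter) : letter k :=
  match a with NS i => Sg (inord i) | NX i => Xg (inord i) end.
Definition to_word (s : seq nletter) : word k := map to_letter s.
Definition npeq (s t : seq nletter) : Prop := peq (to_word s) (to_word t).

Lemma to_word_cat s t : to_word (s ++ t) = to_word s ++ to_word t.
Proof. exact: map_cat. Qed.

Global Instance npeq_equiv : Equivalence npeq.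
Proof.
by split; [move=> ? | move=> ?? | move=> ???];
  [exact: cong_refl | exact: cong_sym | exact: cong_trans].
Qed.

Global Instance cat_npeq_proper : Proper (npeq ==> npeq ==> npeq) cat.
Proof. by move=> a b ab c d cd; rewrite /npeq !to_word_cat; apply: cat_peq_proper. Qed.

Global Instance cons_npeq_proper a : Proper (npeq ==> npeq) (cons a).
Proof. by move=> s t st; rewrite -(cat1s a s) -(cat1s a t) st; reflexivity. Qed.

Hint Extern 0 (npeq _ _) => reflexivity : core.

Lemma npeq_far_sg i j : i < k -> j < k -> (i.+1 < j) || (j.+1 < i) ->
  npeq [:: NS i; NS j] [:: NS j; NS i].
Proof. by move=> hi hj ij; apply/cong_of_rel/r_ss; rewrite /far !inordK. Qed.

Lemma npeq_xs i j : i < k -> j < k -> (i.+1 != j) && (j.+1 != i) ->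
  npeq [:: NX i; NS j] [:: NS j; NX i].
Proof. by move=> hi hj ij; apply/cong_of_rel/r_xs; rewrite /not_adj !inordK. Qed.

Lemma npeq_braid i : i.+1 < k ->
  npeq [:: NS i; NS i.+1; NS i] [:: NS i.+1; NS i; NS i.+1].
Proof. by move=> hi; apply/cong_of_rel/r_braid; rewrite /= !inordK //; lia. Qed.

Lemma npeq_ssx i : i.+1 < k ->
  npeq [:: NS i; NS i.+1; NX i] [:: NX i.+1; NS i; NS i.+1].
Proof. by move=> hi; apply/cong_of_rel/r_ssx; rewrite /= !inordK //; lia. Qed.

Lemma npeq_ssx' i : i.+1 < k ->
  npeq [:: NS i.+1; NS i; NX i.+1] [:: NX i; NS i.+1; NS i].
Proof. by move=> hi; apply/cong_of_rel/r_ssx'; rewrite /= !inordK //; lia. Qed.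

Definition far_from (a : nletter) (j : nat) : bool :=
  (j < k) && (((nidx a).+1 < j) || (j.+1 < nidx a)).

Lemma npeq_comm a j : nidx a < k -> far_from a j -> npeq [:: a; NS j] [:: NS j; a].
Proof.
rewrite /far_from; case: a => i /= hi /andP[hj ij]; first exact: npeq_far_sg.
by apply: npeq_xs => //; apply/andP; split; apply/eqP; lia.
Qed.

Lemma npeq_comm_seq a js s : nidx a < k -> all (far_from a) js ->
  npeq (a :: map NS js ++ s) (map NS js ++ a :: s).
Proof.
move=> ha; elim: js => [_|j js IH /andP[aj ajs]] /=; first by [].
by rewrite -[a :: _]/([:: a; NS j] ++ _) npeq_comm //= IH //.
Qed.

Lemma npeq_pass_pair X Y p q a a' :
  nidx a < k -> nidx a' < k -> all (far_from a') X -> all (far_from a) Y ->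
  npeq [:: p; q; a] [:: a'; p; q] ->
  npeq (map NS X ++ [:: p, q & map NS Y] ++ [:: a])
       (a' :: map NS X ++ [:: p, q & map NS Y]).
Proof.
move=> ha ha' a'X aY pqa.
rewrite /= -(npeq_comm_seq _ ha aY) cats0.
rewrite -[p :: q :: a :: _]/([:: p; q; a] ++ map NS Y) pqa /=.
by rewrite -(npeq_comm_seq _ ha' a'X).
Qed.

Definition asc (t : nat) : seq nletter := map NS (iota 0 t).
Definition desc (t : nat) : seq nletter := map NS (rev (iota 0 t)).

Lemma npeq_asc_shift a t : (nidx a).+1 < t -> t <= k ->
  npeq (asc t ++ [:: a]) (reidx a (nidx a).+1 :: asc t).
Proof.
move=> ha ht; have [r tE] : exists r, t = nidx a + r.+2 by exists (t - (nidx a).+2); lia.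
rewrite /asc tE iotaD add0n /= map_cat -catA /=.
apply: npeq_pass_pair; rewrite ?nidx_reidx; try lia.
- by apply/allP => j; rewrite mem_iota /far_from nidx_reidx; lia.
- by apply/allP => j; rewrite mem_iota /far_from; lia.
- have : (nidx a).+1 < k by lia.
  by case: a {ha ht tE} => i /= hi; [apply: npeq_braid | apply: npeq_ssx].
Qed.

Lemma npeq_desc_shift a t : 0 < nidx a < t -> t <= k ->
  npeq (desc t ++ [:: a]) (reidx a (nidx a).-1 :: desc t).
Proof.
case/andP=> a0 ha ht; have [j aE] : exists j, nidx a = j.+1 by exists (nidx a).-1; lia.
have [r tE] : exists r, t = j + r.+2 by exists (t - j.+2); lia.
rewrite /desc tE iotaD add0n /= rev_cat !rev_cons -!cats1 -!catA /= map_cat -catA /= aE /=.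
apply: npeq_pass_pair; rewrite ?nidx_reidx; try lia.
- by apply/allP => i; rewrite mem_rev mem_iota /far_from nidx_reidx; lia.
- by apply/allP => i; rewrite mem_rev mem_iota /far_from; lia.
- have : j.+1 < k by lia.
  case: a {a0 ha ht tE} aE => i /= -> hj; last exact: npeq_ssx'.
  by symmetry; apply: npeq_braid.
Qed.

Fixpoint delta_idx (t : nat) : seq nat :=
  if t is s.+1 then iota 0 t ++ delta_idx s else [::].

Definition ndelta (t : nat) : seq nletter := map NS (delta_idx t).

Lemma ndeltaS t : ndelta t.+1 = asc t.+1 ++ ndelta t.
Proof. exact: map_cat. Qed.

Lemma ascS t : asc t.+1 = asc t ++ [:: NS t].
Proof. by rewrite /asc -addn1 iotaD map_cat. Qed.

Lemma descS t : desc t.+1 = NS t :: desc t.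
Proof. by rewrite /desc -addn1 iotaD rev_cat. Qed.

Lemma delta_idx_lt t : all (fun j => j < t) (delta_idx t).
Proof.
elim: t => [//|t IH] /=; rewrite all_cat; apply/andP; split.
- by apply/allP => j; rewrite mem_iota; lia.
- by apply: sub_all IH => j /= /ltnW.
Qed.

Lemma npeq_ndelta_desc t : t < k -> npeq (ndelta t.+1) (ndelta t ++ desc t.+1).
Proof.
elim: t => [|t IH] ht; first by [].
have tS_far : all (far_from (NS t.+1)) (delta_idx t).
  by apply: sub_all (delta_idx_lt t) => j /=; rewrite /far_from /=; lia.
transitivity (asc t.+2 ++ ndelta t ++ desc t.+1).
  by rewrite ndeltaS IH //; lia.
by rewrite ascS ndeltaS (descS t.+1) -!catA cat1s /ndelta npeq_comm_seq.
Qed.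

Lemma npeq_ndelta_letter t a : nidx a < t -> t <= k ->
  npeq (ndelta t ++ [:: a]) (reidx a (t.-1 - nidx a) :: ndelta t).
Proof.
elim: t a => [|[|s] IH] a ha ht; first by [].
  by case: a ha => -[|i] //= _; symmetry; apply: npeq_xs.
have [ltas | ] := ltnP (nidx a) s.+1.
  rewrite ndeltaS -catA (IH a) //; last lia.
  rewrite -cat1s catA npeq_asc_shift ?nidx_reidx //; last lia.
  have -> : (s - nidx a).+1 = s.+1 - nidx a by lia.
  by rewrite reidx_reidx ndeltaS.
move=> geas; have aE : nidx a = s.+1 by lia.
rewrite npeq_ndelta_desc; last lia.
rewrite -catA npeq_desc_shift ?aE //; last lia.
rewrite -cat1s catA IH ?nidx_reidx //; last lia.
by rewrite reidx_reidx /= !subnn.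
Qed.

Definition flip (a : nletter) : nletter := reidx a (K - nidx a).

Lemma npeq_ndelta_word w : all (fun a => nidx a < k) w ->
  npeq (ndelta k ++ w) (map flip w ++ ndelta k).
Proof.
elim: w => [_|a w IH /andP[ha hw]]; first by rewrite cats0.
by rewrite -(cat1s a w) catA npeq_ndelta_letter // cat_cons IH //.
Qed.

Lemma ndelta_head t j : j < t -> t <= k -> exists s, npeq (ndelta t) (NS j :: s).
Proof.
elim: t j => [|t IH] [|j] // jt tk.
  by exists (map NS (iota 1 t ++ delta_idx t)).
have [s Hs] := IH j jt (ltnW tk).
exists (asc t.+1 ++ s).
by rewrite ndeltaS Hs -(cat1s (NS j) s) catA (@npeq_asc_shift (NS j)) //.
Qed.

End NatIndexedWords.

Lemma exists_nat_min (P : nat -> Prop) :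
  (exists n, P n) -> exists n, P n /\ forall m, P m -> n <= m.
Proof.
move=> /(dec_inh_nat_subset_has_unique_least_element _ (fun n => classic (P n))).
by case=> n [[Pn n_min] _]; exists n; split=> // m /n_min; lia.
Qed.

Lemma exists_int_max (P : int -> Prop) (b : int) :
  (exists m, P m) -> (forall m, P m -> (m <= b)%R) ->
  exists m, P m /\ forall m', P m' -> (m' <= m)%R.
Proof.
move=> [m0 Pm0] P_le_b.
have [d [[m [Pm dE]] d_min]] :
    exists d, (exists m, P m /\ (b - m = d%:Z)%R) /\
      forall d', (exists m, P m /\ (b - m = d'%:Z)%R) -> d <= d'.
  by apply: exists_nat_min; exists `|b - m0|%N, m0; have := P_le_b _ Pm0; split => //; lia.
exists m; split => // m' Pm'.
have m'_le_b := P_le_b _ Pm'.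
have /d_min : exists m, P m /\ (b - m = `|b - m'|%N%:Z)%R by exists m'; split => //; lia.
lia.
Qed.

Section Exponent.
Variable k : nat.
Implicit Types w : word k.

Definition letter_exp (a : letter k) : int :=
  match a with Sg _ => 1 | Si _ => -1 | Xg _ => 0 end.
Definition exp_sum w : int := \sum_(a <- w) letter_exp a.

Lemma exp_sum_cat w w' : exp_sum (w ++ w') = (exp_sum w + exp_sum w')%R.
Proof. exact: big_cat. Qed.

Lemma exp_sum_sbeq w w' : sbeq w w' -> exp_sum w = exp_sum w'.
Proof.
apply: cong_morph; first exact: exp_sum_cat.
by move=> l r [{}l {}r []|i|i] *; rewrite /exp_sum !big_cons big_nil /=; lia.
Qed.

Lemma exp_sum_conjugate u v : conjugate u v -> exp_sum v = exp_sum u.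
Proof.
case=> g [h] [_ /exp_sum_sbeq hg /exp_sum_sbeq ->].
move: hg; rewrite !exp_sum_cat /exp_sum big_nil; lia.
Qed.

Lemma exp_sum_ge0 w : positive w -> (0 <= exp_sum w)%R.
Proof.
elim: w => [|a w IH] /=; first by rewrite /exp_sum big_nil.
by case/andP=> pa /IH; rewrite /exp_sum big_cons; case: a pa => //= i _; lia.
Qed.

Lemma exp_sum_inv_word w : exp_sum (inv_word w) = (- exp_sum w)%R.
Proof.
rewrite /exp_sum /inv_word big_rev big_map -sumrN.
by apply: eq_bigr => -[].
Qed.

Lemma exp_sum_sigmas (js : seq 'I_k) : exp_sum (map (@Sg k) js) = ((size js)%:Z)%R.
Proof.
elim: js => [|j js IH]; first by rewrite /exp_sum big_nil.
by rewrite /exp_sum big_cons -/(exp_sum _) IH /=; lia.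
Qed.

Lemma exp_sum_delta_pow m : exp_sum (delta_pow k m) = (m * exp_sum (delta k))%R.
Proof.
have flat r w : exp_sum (flatten (nseq r w)) = (r%:Z * exp_sum w)%R.
  elim: r => [|r IH]; first by rewrite mul0r /exp_sum big_nil.
  by rewrite /= exp_sum_cat IH; lia.
case: m => p; rewrite /delta_pow flat ?exp_sum_inv_word //= NegzE; lia.
Qed.

End Exponent.

Lemma flatten_nseqC (T : Type) (s : seq T) p :
  flatten (nseq p s) ++ s = s ++ flatten (nseq p s).
Proof. by elim: p => [|p IH] /=; rewrite ?cats0 // -catA IH. Qed.

Section LexMin.
Variable k : nat.
Implicit Types w : word k.

Lemma peq_size w w' : peq w w' -> size w = size w'.
Proof. by apply: (cong_morph (op := addn)); [exact: size_cat | move=> l r []]. Qed.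

(* Reads a word as a base-[3 k] numeral, so that on words of equal length
   [lexlt] becomes [<] on [nat]. *)
Fixpoint word_code w : nat :=
  if w is a :: s then rank a * (3 * k) ^ size s + word_code s else 0.

Lemma rank_lt (a : letter k) : rank a < 3 * k.
Proof. by case: a => i /=; have := ltn_ord i; lia. Qed.

Lemma word_code_lt w : word_code w < (3 * k) ^ size w.
Proof. by elim: w => [|a w IH] /=; rewrite ?expn0 // expnS; have := rank_lt a; nia. Qed.

Lemma lexlt_word_code w w' : size w = size w' -> lexlt w w' -> word_code w < word_code w'.
Proof.
elim: w w' => [|a w IH] [|b w'] //= [eq_size] /orP[lt_ab | /andP[/eqP eq_ab lt_ww']].
- have := word_code_lt w; rewrite eq_size => lt_w.
  have := leq_mul lt_ab (leqnn ((3 * k) ^ size w')); nia.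
- by have := IH _ eq_size lt_ww'; rewrite eq_size eq_ab; lia.
Qed.

Lemma exists_lexmin (A : word k) : positive A ->
  exists B : word k, [/\ positive B, peq B A &
    forall B', positive B' -> peq B' B -> ~~ lexlt B' B].
Proof.
move=> pos_A; pose coded c := exists B, [/\ positive B, peq B A & word_code B = c].
have [|c [[B [pos_B BA <-]] c_min]] := @exists_nat_min coded; first by exists (word_code A), A.
exists B; split => // B' pos_B' B'B; apply/negP => /(lexlt_word_code (peq_size B'B)).
have /c_min : coded (word_code B') by exists B'; split => //; rewrite B'B.
lia.
Qed.

End LexMin.

Lemma inv_word_cons k (a : letter k) w : inv_word (a :: w) = inv_word w ++ [:: inv_letter a].
Proof. by rewrite /inv_word /= rev_cons cats1. Qed.

Lemma sbeq_sigmas_invr k (js : seq 'I_k) :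
  sbeq (map (@Sg k) js ++ inv_word (map (@Sg k) js)) [::].
Proof.
elim: js => [|j js IH] /=; first by [].
rewrite inv_word_cons -(cat1s (Sg j)) (catA (map _ js)) IH /=.
exact/cong_of_rel/r_inv1.
Qed.

Lemma sbeq_sigmas_invl k (js : seq 'I_k) :
  sbeq (inv_word (map (@Sg k) js) ++ map (@Sg k) js) [::].
Proof.
elim: js => [|j js IH] /=; first by [].
have inv2 : sbeq [:: Si j; Sg j] [::] by exact/cong_of_rel/r_inv2.
rewrite inv_word_cons -catA /= -[Si j :: _]/([:: Si j; Sg j] ++ map (@Sg k) js).
by rewrite inv2.
Qed.

Section Garside.
Variable K : nat.
Local Notation k := K.+1.
Local Notation deltaV := (inv_word (delta k)).
Implicit Types u w W : word k.

Lemma delta_block s : s <= k ->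
  [seq Sg j | j <- enum 'I_k & val j < s] = to_word K (asc s).
Proof.
move=> sk; have -> : [seq j <- enum 'I_k | val j < s] = map inord (iota 0 s).
  apply: (inj_map val_inj).
  have := filter_map val (fun j => j < s) (enum 'I_k).
  rewrite val_enum_ord (filter_iota_ltn 0 sk) => <-.
  by rewrite -map_comp map_id_in // => j; rewrite mem_iota => js /=; rewrite inordK //; lia.
by rewrite /to_word /asc -!map_comp.
Qed.

Lemma delta_to_word : delta k = to_word K (ndelta k).
Proof.
suff blocks t : t <= k -> flatten
    [seq [seq Sg j | j <- enum 'I_k & val j < s] | s <- rev (iota 1 t)] =
    to_word K (ndelta t) by exact: blocks.
elim: t => [//|t IH] tk.
have -> : rev (iota 1 t.+1) = t.+1 :: rev (iota 1 t).
  by rewrite -(addn1 t) iotaD rev_cat addn1.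
rewrite allpairs_cons delta_block // IH; last lia.
by rewrite ndeltaS /to_word map_cat.
Qed.

Lemma delta_sigmas : delta k = map (@Sg k) (map inord (delta_idx k)).
Proof. by rewrite delta_to_word /to_word /ndelta -map_comp -map_comp. Qed.

Lemma delta_invr : sbeq (delta k ++ deltaV) [::].
Proof. by rewrite delta_sigmas; exact: sbeq_sigmas_invr. Qed.

Lemma delta_invl : sbeq (deltaV ++ delta k) [::].
Proof. by rewrite delta_sigmas; exact: sbeq_sigmas_invl. Qed.

Lemma exp_sum_delta_gt0 : (0 < exp_sum (delta k))%R.
Proof. by rewrite delta_sigmas exp_sum_sigmas !size_map /= size_cat size_iota. Qed.

Definition of_letter (a : letter k) : nletter :=
  match a with Sg i | Si i => NS i | Xg i => NX i end.

Lemma to_word_of_letter w : positive w -> to_word K (map of_letter w) = w.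
Proof.
elim: w => [//|a w IH] /andP[pa pw].
by rewrite /= IH //; case: a pa => i //= _; rewrite inord_val.
Qed.

Lemma positive_to_word s : positive (to_word K s).
Proof. by elim: s => [|[] i s IH]. Qed.

Lemma peq_delta_positive w : positive w ->
  exists w', positive w' /\ peq (delta k ++ w) (w' ++ delta k).
Proof.
move=> pos_w; exists (to_word K (map (flip K) (map of_letter w))).
split; first exact: positive_to_word.
have idx_lt : all (fun a => nidx a < k) (map of_letter w).
  by elim: (w) => [|[] i w' IH] //=; rewrite ltn_ord.
have := npeq_ndelta_word idx_lt.
by rewrite /npeq !to_word_cat to_word_of_letter // -delta_to_word.
Qed.

Lemma sbeq_positive_deltaV w : positive w ->
  exists w', positive w' /\ sbeq (w ++ deltaV) (deltaV ++ w').
Proof.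
move=> /peq_delta_positive [w' [pos_w' /peq_sbeq Dw]]; exists w'; split => //.
rewrite -[w ++ _]/([::] ++ w ++ deltaV) -delta_invl -!catA (catA (delta k)) Dw.
by rewrite -!catA delta_invr cats0.
Qed.

Definition deltaV_pow (p : nat) : word k := flatten (nseq p deltaV).

Lemma sbeq_positive_deltaV_pow p w : positive w ->
  exists w', positive w' /\ sbeq (w ++ deltaV_pow p) (deltaV_pow p ++ w').
Proof.
elim: p w => [|p IH] w pos_w; first by exists w; rewrite /= cats0.
have [w1 [pos_w1 w1E]] := sbeq_positive_deltaV pos_w.
have [w2 [pos_w2 w2E]] := IH _ pos_w1.
exists w2; split => //.
by rewrite /deltaV_pow /= catA w1E -catA -/(deltaV_pow p) w2E catA.
Qed.

Lemma sbeq_sigma_inv (i : 'I_k) :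
  exists Q, positive Q /\ sbeq [:: Si i] (Q ++ deltaV).
Proof.
have [s Hs] := ndelta_head (ltn_ord i) (leqnn k).
exists (to_word K s); split; first exact: positive_to_word.
have deltaE : peq (delta k) (Sg i :: to_word K s).
  by move: Hs; rewrite /npeq -delta_to_word /= inord_val.
have inv2 : sbeq [:: Si i; Sg i] [::] by exact/cong_of_rel/r_inv2.
have SiD : sbeq ([:: Si i] ++ delta k) (to_word K s).
  by rewrite (peq_sbeq deltaE) -[_ ++ _]/([:: Si i; Sg i] ++ to_word K s) inv2.
transitivity ([:: Si i] ++ delta k ++ deltaV); first by rewrite delta_invr.
by rewrite catA SiD.
Qed.

Lemma exists_deltaV_pow_form W :
  exists p A, positive A /\ sbeq W (deltaV_pow p ++ A).
Proof.
have letter_step a p : exists p' B,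
    positive B /\ sbeq ([:: a] ++ deltaV_pow p) (deltaV_pow p' ++ B).
  case: a => i.
  - have [B [pos_B BE]] := sbeq_positive_deltaV_pow p (isT : positive [:: Sg i]).
    by exists p, B.
  - have [Q [pos_Q QE]] := sbeq_sigma_inv i.
    have [B [pos_B BE]] := sbeq_positive_deltaV_pow p.+1 pos_Q.
    by exists p.+1, B; rewrite QE -catA.
  - have [B [pos_B BE]] := sbeq_positive_deltaV_pow p (isT : positive [:: Xg i]).
    by exists p, B.
elim: W => [|a W [p [A [pos_A WE]]]]; first by exists 0, [::].
have [p' [B [pos_B BE]]] := letter_step a p.
exists p', (B ++ A); split; first by rewrite /positive all_cat; apply/andP.
by rewrite -cat1s WE catA BE catA.
Qed.

Lemma exists_delta_pow_form W :
  exists m A, positive A /\ sbeq W (delta_pow k m ++ A).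
Proof.
have [[|q] [A ?]] := exists_deltaV_pow_form W.
- by exists 0%R, A.
- by exists (Negz q), A.
Qed.

Lemma delta_pow_succ m : sbeq (delta_pow k m ++ delta k) (delta_pow k (m + 1)).
Proof.
case: m => [p|[|q]].
- by rewrite (_ : (p%:Z + 1)%R = p.+1) /delta_pow ?flatten_nseqC //; lia.
- by rewrite /delta_pow /= cats0 delta_invl.
- rewrite (_ : (Negz q.+1 + 1)%R = Negz q); last by rewrite !NegzE; lia.
  have -> : delta_pow k (Negz q.+1) = flatten (nseq q.+1 deltaV) ++ deltaV.
    by rewrite flatten_nseqC.
  by rewrite -catA delta_invl cats0.
Qed.

Lemma power_le_exp_sum W m A : positive A -> sbeq W (delta_pow k m ++ A) ->
  (m <= `|exp_sum W|)%R.
Proof.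
move=> /exp_sum_ge0 A_ge0 /exp_sum_sbeq; rewrite exp_sum_cat exp_sum_delta_pow.
by have := exp_sum_delta_gt0; nia.
Qed.

Lemma exists_max_power W : exists m A,
  [/\ positive A, sbeq W (delta_pow k m ++ A) &
      forall m' A', positive A' -> sbeq W (delta_pow k m' ++ A') -> (m' <= m)%R].
Proof.
pose power_form m := exists A, positive A /\ sbeq W (delta_pow k m ++ A).
have [||m [[A [pos_A WE]] m_max]] := @exists_int_max power_form `|exp_sum W|%R.
- exact: exists_delta_pow_form.
- by move=> m [A [pos_A]]; exact: power_le_exp_sum.
by exists m, A; split => // m' A' pos_A' WE'; apply: m_max; exists A'.
Qed.

Lemma garside_nf_exists W : exists m A, garside_nf W m A.
Proof.
have [m [A [pos_A WE m_max]]] := exists_max_power W.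
have [B [pos_B BA B_min]] := exists_lexmin pos_A.
exists m, B; split => //; first by rewrite (peq_sbeq BA).
case=> Z [pos_Z /peq_sbeq BZ].
have /m_max : sbeq W (delta_pow k (m + 1) ++ Z).
  by rewrite WE -(peq_sbeq BA) BZ catA delta_pow_succ.
by move/(_ pos_Z); lia.
Qed.

Lemma summit_set_nonempty u : exists m A, summit_set u m A.
Proof.
pose summit_power m := exists W A, conjugate u W /\ garside_nf W m A.
have [||m [[W [A [uW nfW]]] m_max]] := @exists_int_max summit_power `|exp_sum u|%R.
- have [m [A nf_u]] := garside_nf_exists u.
  by exists m, u, A; split => //; exact: conjugate_refl.
- move=> m [W [A [uW [pos_A WE _ _]]]].
  by rewrite -(exp_sum_conjugate uW); exact: power_le_exp_sum WE.
by exists m, A, W; split => // W' m' A' uW' nfW'; apply: m_max; exists W', A'.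
Qed.

End Garside.

Lemma summit_set_conjugate k (u v : word k) m A :
  conjugate u v -> summit_set u m A -> summit_set v m A.
Proof.
move=> uv [W [uW nfW W_max]]; exists W; split => //.
- exact: conjugate_trans (conjugate_sym uv) uW.
- by move=> W' m' A' vW'; apply: W_max; exact: conjugate_trans vW'.
Qed.

Theorem theorem3p2 (n : nat) (hn : 2 <= n) (u v : word n.-1) :
  conjugate u v <->
  (forall (m : int) (A : word n.-1), summit_set u m A <-> summit_set v m A).
Proof.
case: n hn u v => [|[|K]] // _ u v; split.
  by move=> uv m A; split; apply: summit_set_conjugate; last exact: conjugate_sym.
move=> same_summit; have [m [A summit_u]] := summit_set_nonempty u.
have [W [uW [_ WE _ _] _]] := summit_u.
have [W' [vW' [_ W'E _ _] _]] := (same_summit m A).1 summit_u.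
apply: conjugate_trans uW _; apply: conjugate_trans (conjugate_sym vW').
by apply: sbeq_conjugate; rewrite WE W'E.
Qed.
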